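(* For a finite graph $G$ on $n$ vertices, $\theta(G)=D(G)$ if and only if $G$ is asymmetric (i.e. $\mathrm{Aut}(G)=\{\mathrm{id}\}$), or $G\cong K_n$, or $G\cong\overline{K_n}$.
   Context: All graphs are finite and simple. A vertex coloring of $G$ is distinguishing if no non-identity automorphism of $G$ maps every vertex to a vertex of the same color. The distinguishing number $D(G)$ is the minimum number of colors in a distinguishing coloring of $G$. The distinguishing threshold $\theta(G)$ is the minimum $k$ such that every vertex coloring of $G$ using exactly $k$ colors is distinguishing; equivalently $\theta(G)=1+\max\{c(\alpha):\alpha\in\mathrm{Aut}(G)\}$, with $c(\alpha)$ the number of cycles of $\alpha$ (fixed points counted) and $c(\mathrm{id})=0$. *)

From mathcomp Require Import all_boot fingroup perm.
Set Implicit Arguments. Unset Strict Implicit. Unset Printing Implicit Defensive.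

(* A finite simple graph: vertex set T (finType), adjacency e symmetric and
   irreflexive (these are hypotheses of the theorem). *)

Definition is_aut (T : finType) (e : rel T) (s : {perm T}) : bool :=
  [forall x, forall y, e (s x) (s y) == e x y].

Definition asymmetric (T : finType) (e : rel T) : Prop :=
  forall s : {perm T}, is_aut e s -> s = 1%g.

Definition distinguishing (T : finType) (e : rel T) (k : nat)
    (c : {ffun T -> 'I_k}) : bool :=
  [forall s : {perm T}, (is_aut e s && [forall x, c (s x) == c x]) ==> (s == 1%g)].

Definition uses_all (T : finType) (k : nat) (c : {ffun T -> 'I_k}) : bool :=
  [forall i : 'I_k, exists x, c x == i].

Definition has_dist_coloring (T : finType) (e : rel T) : pred nat :=
  fun k => (0 < k) && [exists c : {ffun T -> 'I_k}, distinguishing e c].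

Definition threshold_ok (T : finType) (e : rel T) : pred nat :=
  fun k => (0 < k) &&
    [forall c : {ffun T -> 'I_k}, uses_all c ==> distinguishing e c].

Lemma has_dist_coloring_ex (T : finType) (e : rel T) :
  exists k, has_dist_coloring e k.
Proof.
exists #|T|.+1; apply/andP; split => //.
apply/existsP; exists [ffun x => inord (enum_rank x)].
apply/forallP => s; apply/implyP => /andP [_ /forallP H].
apply/eqP/permP => x; rewrite perm1.
have := H x; rewrite !ffunE => /eqP /(congr1 val) /=.
rewrite !inordK; last 2 first.
- by apply: ltnW; rewrite ltnS ltn_ord.
- by apply: ltnW; rewrite ltnS ltn_ord.
by move=> /val_inj /enum_rank_inj.
Qed.

Lemma threshold_ok_ex (T : finType) (e : rel T) :
  exists k, threshold_ok e k.
Proof.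
exists #|T|.+1; apply/andP; split => //.
apply/forallP => c; apply/implyP => /forallP Hs; exfalso.
have sub : [set: 'I_#|T|.+1] \subset [set y in codom c].
  apply/subsetP => i _; rewrite inE; have /existsP [x /eqP <-] := Hs i.
  exact: codom_f.
have := subset_leq_card sub; rewrite cardsT card_ord cardsE.
move=> H; have := leq_trans H (card_size _); rewrite size_codom.
by rewrite ltnn.
Qed.

Definition dist_number (T : finType) (e : rel T) : nat :=
  ex_minn (has_dist_coloring_ex e).

Definition dist_threshold (T : finType) (e : rel T) : nat :=
  ex_minn (threshold_ok_ex e).

Definition isomorphic_to (T : finType) (e : rel T) (n : nat) (r : rel 'I_n) : Prop :=
  exists f : T -> 'I_n, bijective f /\ forall x y, e x y = r (f x) (f y).

Definition complete_rel (n : nat) : rel 'I_n := fun i j => i != j.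
Definition empty_rel (n : nat) : rel 'I_n := fun _ _ => false.
Arguments complete_rel n : clear implicits.
Arguments empty_rel n : clear implicits.

From mathcomp Require Import all_boot fingroup perm.
From mathcomp Require Import zify.

Set Implicit Arguments. Unset Strict Implicit. Unset Printing Implicit Defensive.
Import GroupScope.

(* Backward direction: for an asymmetric graph every coloring distinguishes,
   so theta = D = 1; for a complete or edgeless graph every permutation is an
   automorphism, so a coloring distinguishes iff it is injective, and
   theta = D = max(1, n).

   Forward direction: if theta = D = m + 2, no (m+1)-coloring distinguishes
   while every coloring using exactly m + 2 colors does, and n > m + 1.
   Coloring a list L of m vertices injectively and the rest with one color
   yields a nontrivial automorphism fixing L pointwise, and it must act as a
   single cycle on the complement of L.  For m > 0 this lets us fix any
   vertex x and move any y <> x to any z <> x, so adjacency to x is constant;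
   for m = 0 the graph is a circulant with trivial vertex stabilizers, which
   forces n <= 2.  Either way the graph is complete or edgeless. *)

Section Automorphisms.
Variables (T : finType) (e : rel T).

Lemma autP (s : {perm T}) :
  reflect (forall x y, e (s x) (s y) = e x y) (is_aut e s).
Proof.
apply: (iffP forallP) => [H x y|H x]; first exact/eqP/(forallP (H x) y).
by apply/forallP => y; rewrite H.
Qed.

Lemma aut1 : is_aut e 1.
Proof. by apply/autP => x y; rewrite !perm1. Qed.

Lemma autM s t : is_aut e s -> is_aut e t -> is_aut e (s * t).
Proof. by move=> /autP hs /autP ht; apply/autP => x y; rewrite !permM ht hs. Qed.

Lemma autX s n : is_aut e s -> is_aut e (s ^+ n).
Proof.
move=> hs; elim: n => [|n IH]; first by rewrite expg0 aut1.
by rewrite expgS autM.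
Qed.

Lemma distP k (c : {ffun T -> 'I_k}) :
  reflect (forall s, is_aut e s -> (forall x, c (s x) = c x) -> s = 1)
          (distinguishing e c).
Proof.
apply: (iffP forallP) => [H s hs hc|H s].
  apply/eqP; move/implyP: (H s); apply; rewrite hs /=.
  by apply/forallP => x; rewrite hc.
by apply/implyP => /andP[hs /forallP hc]; apply/eqP/H => // x; apply/eqP.
Qed.

End Automorphisms.

Lemma aut_fixed_adj_orbit (T : finType) (e : rel T) (s : {perm T}) x y z :
  is_aut e s -> s x = x -> z \in porbit s y -> e x z = e x y.
Proof.
move=> hs sx /porbitP[i ->].
have sxi : (s ^+ i) x = x by rewrite permX; elim: i => //= i ->.
by rewrite -{1}sxi (autP _ _ (autX i hs)).
Qed.

Section Colorings.
Variable T : finType.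

Lemma injective_distinguishing (e : rel T) k (c : {ffun T -> 'I_k}) :
  injective c -> distinguishing e c.
Proof.
by move=> ic; apply/distP => s _ hc; apply/permP => x; rewrite perm1; apply: ic.
Qed.

Lemma injective_coloring_card k (c : {ffun T -> 'I_k}) :
  injective c -> #|T| <= k.
Proof. by move/leq_card; rewrite card_ord. Qed.

Lemma uses_all_injective k (c : {ffun T -> 'I_k}) :
  uses_all c -> #|T| <= k -> injective c.
Proof.
move=> /forallP uc hk.
have cT : c @: [set: T] = [set: 'I_k].
  apply/setP => i; rewrite !inE; have /existsP[x /eqP <-] := uc i.
  by rewrite imset_f ?inE.
have /imset_injP ic : #|c @: [set: T]| == #|[set: T]|.
  rewrite cT !cardsT card_ord eqn_leq hk andbT.
  by have := leq_imset_card c [set: T]; rewrite cT !cardsT card_ord.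
by move=> x y; apply: ic; rewrite inE.
Qed.

Lemma uses_all_exists k :
  0 < k -> k <= #|T| -> exists c : {ffun T -> 'I_k}, uses_all c.
Proof.
case: k => [//|k] _ kT.
exists [ffun v => inord (minn (enum_rank v) k)]; apply/forallP => i.
have iT : i < #|T| by move: (ltn_ord i); lia.
apply/existsP; exists (enum_val (Ordinal iT)); apply/eqP/ord_inj.
by rewrite ffunE enum_valK /= inordK; move: (ltn_ord i); lia.
Qed.

End Colorings.

(* Asymmetric graphs: every coloring is distinguishing, so D = theta = 1. *)
Lemma asymmetric_threshold (T : finType) (e : rel T) :
  asymmetric e -> dist_threshold e = dist_number e.
Proof.
move=> asym; have dist k (c : {ffun T -> 'I_k}) : distinguishing e c.
  by apply/distP => s hs _; apply: asym.
apply: eq_ex_minn => -[//|k]; rewrite /threshold_ok /has_dist_coloring /=.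
apply/idP/idP => _; first by apply/existsP; exists [ffun=> ord0].
by apply/forallP => c; rewrite dist implybT.
Qed.

(* If every permutation is an automorphism, a coloring is distinguishing
   exactly when it is injective: two vertices of equal color can be swapped. *)
Lemma full_aut_distinguishing (T : finType) (e : rel T) k (c : {ffun T -> 'I_k}) :
  (forall s, is_aut e s) -> distinguishing e c = injectiveb c.
Proof.
move=> full; apply/idP/injectiveP => [hc x y cxy|]; last first.
  exact: injective_distinguishing.
have swap1 : tperm x y = 1.
  by apply: (distP _ _ hc) => // v; case: tpermP => // ->.
by have := congr1 (fun p : {perm T} => p x) swap1; rewrite tpermL perm1.
Qed.

(* ... hence both D and theta equal max(1, #|T|). *)
Lemma full_aut_threshold (T : finType) (e : rel T) :
  (forall s, is_aut e s) -> dist_threshold e = dist_number e.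
Proof.
move=> full; apply: eq_ex_minn => -[//|k]; rewrite /threshold_ok /has_dist_coloring /=.
have [kT|Tk] := leqP #|T| k.+1.
  apply/idP/idP => _.
    apply/existsP; exists [ffun v => widen_ord kT (enum_rank v)].
    apply: injective_distinguishing => x y; rewrite !ffunE => /(congr1 val) /=.
    by move/val_inj/enum_rank_inj.
  apply/forallP => c; apply/implyP => uc.
  exact/injective_distinguishing/uses_all_injective.
apply/idP/idP => [/forallP| /existsP[c]]; last first.
  by rewrite full_aut_distinguishing // => /injectiveP/injective_coloring_card; lia.
have [c uc] := @uses_all_exists T k.+1 erefl (ltnW Tk).
move=> /(_ c); rewrite uc full_aut_distinguishing //= => /injectiveP.
by move/injective_coloring_card; lia.
Qed.

(* If theta = D, then either D = 1 (the graph is asymmetric) or D = m + 2 for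
   some m with: no (m+1)-coloring distinguishes, every coloring using exactly
   m + 2 colors distinguishes, and there are more than m + 1 vertices (else
   every coloring using m + 1 colors would be injective, so theta <= m + 1). *)
Lemma equal_threshold_cases (T : finType) (e : rel T) :
  dist_threshold e = dist_number e ->
  asymmetric e \/ exists m, [/\ forall c : {ffun T -> 'I_m.+1}, ~~ distinguishing e c,
    forall c : {ffun T -> 'I_m.+2}, uses_all c -> distinguishing e c
    & m.+1 < #|T|].
Proof.
rewrite /dist_threshold /dist_number.
case: ex_minnP => kt Pt min_t; case: ex_minnP => [[|[|m]]] Pd min_d; move=> eq_k.
- by case/andP: Pd.
- left => s hs; case/andP: Pd => _ /existsP[c /distP]; apply => // x.
  by rewrite (ord1 (c (s x))) (ord1 (c x)).
right; exists m; subst kt; split.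
- move=> c; apply/negP => hc.
  have : has_dist_coloring e m.+1 by apply/andP; split => //; apply/existsP; exists c.
  by move/min_d; rewrite ltnn.
- by move=> c uc; case/andP: Pt => _ /forallP /(_ c) /implyP; apply.
rewrite ltnNge; apply/negP => Tm.
have : threshold_ok e m.+1.
  apply/andP; split => //; apply/forallP => c; apply/implyP => uc.
  exact/injective_distinguishing/uses_all_injective.
by move/min_t; rewrite ltnn.
Qed.

(* For a
   list L of m distinct vertices, color L injectively by position and all
   other vertices with one more color (its index [size L]). *)
Section PointwiseStabilizer.
Variables (T : finType) (e : rel T) (m : nat).
Hypothesis no_dist : forall c : {ffun T -> 'I_m.+1}, ~~ distinguishing e c.
Hypothesis all_dist :
  forall c : {ffun T -> 'I_m.+2}, uses_all c -> distinguishing e c.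
Variable L : seq T.
Hypotheses (L_uniq : uniq L) (L_size : size L = m).

Lemma index_fixed (s : {perm T}) v :
  {in L, forall u, s u = u} -> index (s v) L = index v L.
Proof.
move=> fixL; have [vL|vNL] := boolP (v \in L); first by rewrite fixL.
rewrite !memNindex //; apply: contra vNL => svL.
by rewrite -(perm_inj (fixL _ svL)).
Qed.

(* The positional (m+1)-coloring v |-> index v L is not distinguishing, and
   an automorphism preserving it fixes L pointwise. *)
Lemma fixing_aut_exists :
  exists s : {perm T}, [/\ is_aut e s, s != 1 & {in L, forall v, s v = v}].
Proof.
pose c : {ffun T -> 'I_m.+1} := [ffun v => inord (index v L)].
have c_val v : (c v : nat) = index v L.
  by rewrite ffunE inordK // ltnS -L_size index_size.
have /forallPn[s] := no_dist c.
rewrite negb_imply => /andP[/andP[hs /forallP hc] s1]; exists s; split => // v vL.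
have := eqP (hc v) => /(congr1 val); rewrite /= !c_val => idx.
have svL : s v \in L by rewrite -index_mem idx index_mem.
by rewrite -(nth_index v svL) idx nth_index.
Qed.

(* Any nontrivial automorphism fixing L pointwise acts as a single cycle on
   the complement of L: otherwise giving one of its cycles outside L a new
   color yields a coloring using all m + 2 colors that it preserves. *)
Lemma fixing_aut_cycle (s : {perm T}) y z :
  is_aut e s -> s != 1 -> {in L, forall v, s v = v} ->
  y \notin L -> z \notin L -> z \in porbit s y.
Proof.
move=> hs s1 fixL yL zL; apply: contraT => zNy.
pose c : {ffun T -> 'I_m.+2} :=
  [ffun v => inord (index v L + ((v \notin L) && (v \notin porbit s y)))].
have c_val v : (c v : nat) = index v L + ((v \notin L) && (v \notin porbit s y)).
  rewrite ffunE inordK //; have := index_size v L; rewrite L_size.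
  by case: (_ && _); lia.
have orbit_s v : (s v \in porbit s y) = (v \in porbit s y).
  by rewrite !(porbit_sym s _ y) -[s v]/((s ^+ 1) v) porbit_perm.
have inL_s v : (s v \in L) = (v \in L).
  by rewrite -!index_mem index_fixed.
have c_s : forall v, c (s v) = c v.
  by move=> v; apply/ord_inj; rewrite !c_val index_fixed // orbit_s inL_s.
suff /distP c_dist : distinguishing e c.
  by move: s1; rewrite (c_dist s hs c_s) eqxx.
apply: all_dist; apply/forallP => i; apply/existsP; case: (ltngtP i m) => [im|mi|im].
- exists (nth y L i); apply/eqP/ord_inj.
  by rewrite c_val index_uniq ?L_size // mem_nth ?L_size //= addn0.
- exists z; apply/eqP/ord_inj; rewrite c_val memNindex // L_size zL zNy /=.
  by move: (ltn_ord i) mi; lia.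
- exists y; apply/eqP/ord_inj.
  by rewrite c_val memNindex // L_size porbit_id andbF addn0 im.
Qed.

End PointwiseStabilizer.

(* The case D = theta = 2.  If every coloring using exactly two colors is
   distinguishing and there is a vertex y <> x, an automorphism fixing x is
   the identity: it preserves the coloring giving x alone its own color. *)
Lemma stabilizer_trivial (T : finType) (e : rel T)
    (two_dist : forall c : {ffun T -> 'I_2}, uses_all c -> distinguishing e c)
    x y (yx : y != x) (r : {perm T}) :
  is_aut e r -> r x = x -> r = 1.
Proof.
move=> hr rx; pose c : {ffun T -> 'I_2} := [ffun v => inord (v != x)].
have c_val v : (c v : nat) = (v != x) by rewrite ffunE inordK //; case: (_ != _).
have /distP : distinguishing e c.
  apply: two_dist; apply/forallP => -[[|[|//]] i2]; apply/existsP.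
    by exists x; apply/eqP/ord_inj; rewrite c_val eqxx.
  by exists y; apply/eqP/ord_inj; rewrite c_val yx.
apply => // v; apply/ord_inj; rewrite !c_val.
by rewrite -{1}rx (inj_eq perm_inj).
Qed.

(* A graph with a transitive cyclic automorphism group <s> is a circulant
   graph, and "inversion" s^i x |-> s^-i x is an automorphism fixing x.  If
   the stabilizer of x is trivial, inversion is the identity, so s^2 = 1. *)
Lemma circulant_involution (T : finType) (e : rel T) (e_sym : symmetric e)
    (s : {perm T}) x :
  is_aut e s -> (forall u, u \in porbit s x) ->
  (forall r, is_aut e r -> r x = x -> r = 1) -> s ^+ 2 = 1.
Proof.
move=> hs s_trans stab.
have idx u : exists i, u == (s ^+ i) x by have /porbitP[i ->] := s_trans u; exists i.
pose a u := xchoose (idx u).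
have aP u : (s ^+ a u) x = u by rewrite -(eqP (xchooseP (idx u))).
pose inv u := (s ^+ a u)^-1 x.
have shift u v : (s ^+ (a u + a v)) (inv u) = v by rewrite expgD permM permKV aP.
have inv_inj : injective inv.
  by move=> u v eq_uv; rewrite -[v](shift u v) eq_uv addnC shift.
have inv_aut : is_aut e (perm inv_inj).
  apply/autP => u v; rewrite !permE.
  by rewrite -(autP _ _ (autX (a u + a v) hs)) shift addnC shift e_sym.
have inv1 : perm inv_inj = 1.
  by apply: stab; rewrite // permE; apply: (canLR (permK _)); rewrite aP.
have back_sx : (s ^+ a (s x)) (s x) = x.
  have := congr1 (fun p : {perm T} => p (s x)) inv1; rewrite permE perm1.
  by move=> inv_sx; rewrite -{2}inv_sx permKV.
apply: stab; first exact: autX.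
rewrite expgS expg1 permM -[in LHS](aP (s x)).
by rewrite -permM -expgSr expgS permM back_sx.
Qed.

Lemma involution_orbit (T : finType) (s : {perm T}) x u :
  s ^+ 2 = 1 -> u \in porbit s x -> u = x \/ u = s x.
Proof.
move=> s2 /porbitP[i ->]; rewrite -(expg_mod i s2).
have : i %% 2 < 2 by rewrite ltn_pmod.
by case: (i %% 2) => [|[|]] // _; [left; rewrite perm1 | right].
Qed.

Lemma avoiding_list (T : finType) (A : {set T}) k :
  k <= #|~: A| -> exists L : seq T,
    [/\ uniq L, size L = k & forall v, v \in A -> v \notin L].
Proof.
move=> kA; exists (take k (enum (~: A))); split.
- by rewrite take_uniq ?enum_uniq.
- by rewrite size_takel // -cardE.
by move=> v vA; apply/negP => /mem_take; rewrite mem_enum inE vA.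
Qed.

(* For m = 0, the whole graph is a single
   cycle of an automorphism s and vertex stabilizers are trivial, so s is an
   involution and there is only one vertex besides x.  For m > 0, fix x and
   m vertices outside {x, y, z}: the fixing automorphism carries y to z. *)
Lemma adjacency_locally_constant (T : finType) (e : rel T) (e_sym : symmetric e) m
    (no_dist : forall c : {ffun T -> 'I_m.+1}, ~~ distinguishing e c)
    (all_dist : forall c : {ffun T -> 'I_m.+2}, uses_all c -> distinguishing e c)
    (T_big : m.+1 < #|T|) x y z :
  y != x -> z != x -> e x y = e x z.
Proof.
move=> yx zx; have [<-//|yz] := eqVneq y z.
case: m no_dist all_dist T_big => [|m] no_dist all_dist T_big.
  have [s [hs s1 _]] := fixing_aut_exists no_dist (L := [::]) erefl.
  have s_trans u : u \in porbit s x.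
    by apply: (fixing_aut_cycle all_dist (L := [::])) hs s1 _ _ _.
  have stab := stabilizer_trivial all_dist yx.
  have s2 := circulant_involution e_sym hs s_trans stab.
  have other u : u != x -> u = s x.
    by case: (involution_orbit s2 (s_trans u)) => ->; rewrite ?eqxx.
  by rewrite (other y yx) (other z zx).
have room : m <= #|~: [set x; y; z]|.
  have := cardsC [set x; y; z]; rewrite setUC cardsU1 cards2; move: T_big.
  by case: (_ \notin _); case: (_ != _) => /=; lia.
have [L' [L'_uniq L'_size L'_avoid]] := avoiding_list room.
set L := x :: L'.
have L_uniq : uniq L by rewrite /= L'_avoid ?L'_uniq // !inE eqxx.
have L_size : size L = m.+1 by rewrite /= L'_size.
have [s [hs s1 fixL]] := fixing_aut_exists no_dist L_size.
have yNL : y \notin L by rewrite inE negb_or yx L'_avoid // !inE eqxx !orbT.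
have zNL : z \notin L by rewrite inE negb_or zx L'_avoid // !inE eqxx !orbT.
apply/esym/(aut_fixed_adj_orbit hs (fixL x (mem_head x L'))).
exact: (fixing_aut_cycle all_dist L_uniq L_size hs s1 fixL yNL zNL).
Qed.

Lemma adjacency_constant (T : finType) (e : rel T) (e_sym : symmetric e)
    (local : forall x y z, y != x -> z != x -> e x y = e x z) a b c d :
  a != b -> c != d -> e a b = e c d.
Proof.
move=> ab cd; have ba : b != a by rewrite eq_sym.
have [da|ad] := eqVneq d a.
  by rewrite da (e_sym c a) (local a b c ba) // -da.
by rewrite (local a b d ba ad) (e_sym a d) (local d a c _ cd) 1?eq_sym // e_sym.
Qed.

Lemma constant_graph_iso (T : finType) (e : rel T) (e_irr : irreflexive e)
    (const : forall a b c d, a != b -> c != d -> e a b = e c d) :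
  isomorphic_to e (complete_rel #|T|) \/ isomorphic_to e (empty_rel #|T|).
Proof.
have rank_bij : bijective (@enum_rank T).
  by exists enum_val; [exact: enum_rankK | exact: enum_valK].
have [/existsP[x0 /existsP[y0 e0]]|/existsPn none] := boolP [exists x, exists y, e x y].
  left; exists enum_rank; split => // u v.
  rewrite /complete_rel (inj_eq enum_rank_inj).
  have [->|uv] := eqVneq u v; first by rewrite e_irr.
  have x0y0 : x0 != y0 by apply: contraTneq e0 => ->; rewrite e_irr.
  by rewrite (const u v x0 y0).
by right; exists enum_rank; split => // u v; apply/negbTE; move/existsPn: (none u).
Qed.

Lemma complete_all_aut (T : finType) (e : rel T) :
  isomorphic_to e (complete_rel #|T|) -> forall s, is_aut e s.
Proof.
case=> f [f_bij f_iso] s; apply/autP => x y.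
by rewrite !f_iso /complete_rel !(bij_eq f_bij) (inj_eq perm_inj).
Qed.

Lemma empty_all_aut (T : finType) (e : rel T) :
  isomorphic_to e (empty_rel #|T|) -> forall s, is_aut e s.
Proof. by case=> f [_ f_iso] s; apply/autP => x y; rewrite !f_iso. Qed.

Theorem mainTheorem7 (T : finType) (e : rel T)
  (e_sym : symmetric e) (e_irr : irreflexive e) :
  dist_threshold e = dist_number e <->
  [\/ asymmetric e,
      isomorphic_to e (complete_rel #|T|)
    | isomorphic_to e (empty_rel #|T|)].
Proof.
split.
  case/equal_threshold_cases => [asym|[m [no_dist all_dist T_big]]].
    exact: Or31.
  have local := adjacency_locally_constant e_sym no_dist all_dist T_big.
  have const := adjacency_constant e_sym local.
  by case: (constant_graph_iso e_irr const) => iso; [apply: Or32 | apply: Or33].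
case=> [asym|iso|iso].
- exact: asymmetric_threshold.
- exact/full_aut_threshold/complete_all_aut.
- exact/full_aut_threshold/empty_all_aut.
Qed.
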